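(* Let $0\le c<1$, $\theta=-\frac12\arcsin c$, $b_*$ the kink of speed $c$, and $w_c$ the weight, all as defined in the context. Suppose $\lambda\in\mathbb C$ and $\tilde B\in L^2(\mathbb R;\mathbb C^2)$ satisfy $L_{*,w_c}\tilde B=\lambda\tilde B$. Define $\beta$ and $B=(U,V)$ on $\mathbb R$ by $$\tilde B(\sqrt{1-c^2}\,X)=(\sigma_0\cos\theta+\sigma_1\sin\theta)\,\beta(X),$$ $$B(X)=e^{-c\Lambda X}\exp\Big(w_c(\sqrt{1-c^2}X)+\int_{-\infty}^X\mathcal N_p(Y)\,dY\Big)\beta(X),\qquad\Lambda=\frac{\lambda}{\sqrt{1-c^2}}.$$ Then $$U_X=(\mathcal N_0+\mathcal N_p)U+(\Lambda-2c\mathcal N_p)V,\qquad V_X=\Lambda U-(\mathcal N_0+\mathcal N_p)V.$$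
   Context: Nonlinearity: $\mathcal N:[0,\infty)\to\mathbb R$ is smooth, $\mathcal N'(s)<0$ for $s>0$, $\mathcal N(0)=1$, $\mathcal N(1)=0$, $\lim_{s\to\infty}\mathcal N(s)\in[-\infty,0)$, and $K:=-\mathcal N'(1)>0$. Kink of speed $c$: $b_*=(u_*,v_* )$ with $u_*'=\frac{u_*\mathcal N(u_*^2+v_*^2)}{\sqrt{1-c^2}}$, $v_*=u_*\tan\theta$, $u_*>0$, $u_*^2+v_*^2=\frac14$ at $x=0$. $r_0$ solves $r_0'=r_0\mathcal N(r_0^2)$, $r_0(0)=\frac12$ (the $c=0$ kink amplitude). Set $\mathcal N_0(X)=\mathcal N(r_0(X)^2)$ and $\mathcal N_p(X)=\mathcal N'(r_0(X)^2)r_0(X)^2$. Weight: $w_c$ is smooth with $w_c(x)=0$ for $x\le-1$ and $w_c(x)=\frac{K}{\sqrt{1-c^2}}x$ for $x\ge1$. Operator: $L_{*,w_c}=\Sigma(\partial_x-w_c'(x))+A_*(x)$, with $\Sigma=\begin{bmatrix}c&1\\1&c\end{bmatrix}$, $r_*^2=u_*^2+v_*^2$, and $A_*=\begin{bmatrix}2\mathcal N'(r_*^2)u_*v_*&\mathcal N(r_*^2)+2\mathcal N'(r_*^2)v_*^2\\-\mathcal N(r_*^2)-2\mathcal N'(r_*^2)u_*^2&-2\mathcal N'(r_*^2)u_*v_*\end{bmatrix}$. This is the weight-conjugated linearization of $u_t=cu_x+v_x+\mathcal N(u^2+v^2)v$, $v_t=u_x+cv_x-\mathcal N(u^2+v^2)u$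 about $b_*$. $\sigma_0$ is the $2\times2$ identity and $\sigma_1=\begin{bmatrix}0&1\\1&0\end{bmatrix}$. *)

From Stdlib Require Import Reals.
From Coquelicot Require Import Coquelicot.

Local Open Scope R_scope.

Definition cexp (z : C) : C := (exp (Re z) * cos (Im z), exp (Re z) * sin (Im z)).

(* C^2 vectors are pairs (C * C); real 2x2 matrix [[a,b],[c,d]] acting on them *)
Definition mv (a b c d : R) (z : C * C) : C * C :=
  ((RtoC a * fst z + RtoC b * snd z)%C, (RtoC c * fst z + RtoC d * snd z)%C).
Definition vscale (k : C) (z : C * C) : C * C := ((k * fst z)%C, (k * snd z)%C).
Definition vadd (z1 z2 : C * C) : C * C := ((fst z1 + fst z2)%C, (snd z1 + snd z2)%C).
Definition vsub (z1 z2 : C * C) : C * C := ((fst z1 - fst z2)%C, (snd z1 - snd z2)%C).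

Definition smooth_on_nonneg (N : R -> R) : Prop :=
  (forall (n : nat) (x : R), 0 < x -> ex_derive_n N n x) /\
  (forall n : nat, exists l : R, filterlim (Derive_n N n) (at_right 0) (locally l)) /\
  filterlim N (at_right 0) (locally (N 0)).

Definition admissible_nonlinearity (N : R -> R) : Prop :=
  smooth_on_nonneg N /\
  (forall s, 0 < s -> Derive N s < 0) /\
  N 0 = 1 /\ N 1 = 0 /\
  (exists l : Rbar, is_lim N p_infty l /\ Rbar_lt l 0) /\
  0 < - Derive N 1.

Definition Kconst (N : R -> R) : R := - Derive N 1.

Definition theta (c : R) : R := - (1/2) * asin c.

Definition is_kink (N : R -> R) (c : R) (u v : R -> R) : Prop :=
  (forall x, is_derive u x (u x * N (u x ^ 2 + v x ^ 2) / sqrt (1 - c ^ 2))) /\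
  (forall x, v x = u x * tan (theta c)) /\
  (forall x, 0 < u x) /\
  u 0 ^ 2 + v 0 ^ 2 = 1 / 4.

(* r0 : the c = 0 kink amplitude *)
Definition is_r0 (N : R -> R) (r0 : R -> R) : Prop :=
  (forall x, is_derive r0 x (r0 x * N (r0 x ^ 2))) /\ r0 0 = 1 / 2.

Definition is_weight (N : R -> R) (c : R) (w : R -> R) : Prop :=
  (forall (n : nat) (x : R), ex_derive_n w n x) /\
  (forall x, x <= -1 -> w x = 0) /\
  (forall x, 1 <= x -> w x = Kconst N / sqrt (1 - c ^ 2) * x).

Definition calN0 (N r0 : R -> R) (X : R) : R := N (r0 X ^ 2).
Definition calNp (N r0 : R -> R) (X : R) : R := Derive N (r0 X ^ 2) * r0 X ^ 2.

Definition Astar (N u v : R -> R) (x : R) (z : C * C) : C * C :=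
  let r2 := u x ^ 2 + v x ^ 2 in
  let N1 := Derive N r2 in
  mv (2 * N1 * u x * v x) (N r2 + 2 * N1 * v x ^ 2)
     (- N r2 - 2 * N1 * u x ^ 2) (- 2 * N1 * u x * v x) z.

(* (L_{*,w_c} Bt)(x), where dBt is the derivative of Bt:
   Sigma (dBt - w' Bt) + A_* Bt, Sigma = [[c,1],[1,c]] *)
Definition Lstar_w (N : R -> R) (c : R) (u v w : R -> R)
    (Bt dBt : R -> C * C) (x : R) : C * C :=
  vadd (mv c 1 1 c (vsub (dBt x) (vscale (RtoC (Derive w x)) (Bt x))))
       (Astar N u v x (Bt x)).

(* sigma0 cos(th) + sigma1 sin(th) *)
Definition rotmx (th : R) (z : C * C) : C * C := mv (cos th) (sin th) (sin th) (cos th) z.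

(* Bt in L^2(R; C^2) (Bt is continuous here, so the improper Riemann integral
   of |Bt|^2 agrees with the Lebesgue one) *)
Definition L2_C2 (Bt : R -> C * C) : Prop :=
  ex_RInt_gen (fun x => Cmod (fst (Bt x)) ^ 2 + Cmod (snd (Bt x)) ^ 2)
    (Rbar_locally m_infty) (Rbar_locally p_infty).

From Stdlib Require Import Reals Lra Nsatz.
From Coquelicot Require Import Coquelicot.

Local Open Scope R_scope.

(* In the variable [X = x / sqrt (1 - c^2)] the kink has the direction [theta c] and an
   amplitude solving the [c = 0] profile equation [r' = r N (r^2)]; by uniqueness for this
   autonomous ODE the amplitude is [r0].  The rotation [sigma0 cos θ + sigma1 sin θ]
   commutes with [Σ], so conjugating the eigenvalue equation by it gives a first-order
   system for [beta] whose coefficients involve only [N0], [Np], [w'] and [Λ].  The factor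
   [exp (c Λ X - w - ∫ Np)] relating [beta] to [B] cancels the [w'] and [- c Λ] terms,
   and [∫_{-oo}^X Np = ln N (r0 X ^ 2) / 2] since [r0] tends to [0] at [-oo]. *)

(** * Derivatives of complex- and vector-valued functions *)

Lemma is_derive_eq {V : NormedModule R_AbsRing} (f : R -> V) x l l' :
  is_derive f x l -> l = l' -> is_derive f x l'.
Proof. now intros H <-. Qed.

Section ProductDerivatives.
Context {U V : NormedModule R_AbsRing}.

Lemma is_derive_fst (f : R -> U * V) x l :
  is_derive f x l -> is_derive (fun t => fst (f t)) x (fst l).
Proof.
  intros H. eapply filterdiff_ext_lin.
  - apply (filterdiff_comp' f fst x _ fst H), filterdiff_linear, is_linear_fst.
  - reflexivity.
Qed.

Lemma is_derive_snd (f : R -> U * V) x l :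
  is_derive f x l -> is_derive (fun t => snd (f t)) x (snd l).
Proof.
  intros H. eapply filterdiff_ext_lin.
  - apply (filterdiff_comp' f snd x _ snd H), filterdiff_linear, is_linear_snd.
  - reflexivity.
Qed.

Lemma is_derive_pair (f : R -> U) (g : R -> V) x l1 l2 :
  is_derive f x l1 -> is_derive g x l2 -> is_derive (fun t => (f t, g t)) x (l1, l2).
Proof.
  intros Hf Hg. eapply filterdiff_ext_lin.
  - apply (filterdiff_comp'_2 f g pair x _ _ pair Hf Hg).
    eapply filterdiff_ext_lin; [eapply filterdiff_ext; [|apply filterdiff_id]|];
      intros []; reflexivity.
  - reflexivity.
Qed.

End ProductDerivatives.

Lemma is_derive_C (f : R -> C) x (l : C) :
  is_derive (fun t => Re (f t)) x (Re l) -> is_derive (fun t => Im (f t)) x (Im l) ->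
  is_derive f x l.
Proof.
  intros H1 H2. apply (is_derive_ext (fun t => (Re (f t), Im (f t)))).
  - intros t. now destruct (f t).
  - destruct l. exact (is_derive_pair _ _ _ _ _ H1 H2).
Qed.

Lemma is_derive_Ceq (f : R -> C) x (l l' : C) :
  is_derive f x l -> l = l' -> is_derive f x l'.
Proof. now intros H <-. Qed.

Lemma is_derive_Re (f : R -> C) x (l : C) :
  is_derive f x l -> is_derive (fun t => Re (f t)) x (Re l).
Proof. exact (is_derive_fst (U := R_NormedModule) (V := R_NormedModule) f x l). Qed.

Lemma is_derive_Im (f : R -> C) x (l : C) :
  is_derive f x l -> is_derive (fun t => Im (f t)) x (Im l).
Proof. exact (is_derive_snd (U := R_NormedModule) (V := R_NormedModule) f x l). Qed.

Lemma is_derive_RtoC (f : R -> R) x l :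
  is_derive f x l -> is_derive (fun t => RtoC (f t)) x (RtoC l).
Proof.
  intros H. apply is_derive_C; simpl; [exact H |].
  apply (is_derive_eq _ _ zero); [apply is_derive_const | reflexivity].
Qed.

Lemma is_derive_Cplus (f g : R -> C) x df dg :
  is_derive f x df -> is_derive g x dg -> is_derive (fun t => f t + g t)%C x (df + dg)%C.
Proof.
  intros Hf Hg. apply is_derive_C.
  - apply (is_derive_plus (K := R_AbsRing) (V := R_NormedModule)); now apply is_derive_Re.
  - apply (is_derive_plus (K := R_AbsRing) (V := R_NormedModule)); now apply is_derive_Im.
Qed.

Lemma is_derive_Cminus (f g : R -> C) x df dg :
  is_derive f x df -> is_derive g x dg -> is_derive (fun t => f t - g t)%C x (df - dg)%C.
Proof.
  intros Hf Hg. apply is_derive_C.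
  - apply (is_derive_minus (K := R_AbsRing) (V := R_NormedModule)); now apply is_derive_Re.
  - apply (is_derive_minus (K := R_AbsRing) (V := R_NormedModule)); now apply is_derive_Im.
Qed.

Lemma is_derive_Cmult (f g : R -> C) x df dg :
  is_derive f x df -> is_derive g x dg ->
  is_derive (fun t => f t * g t)%C x (df * g x + f x * dg)%C.
Proof.
  intros Hf Hg.
  pose proof (is_derive_Re _ _ _ Hf). pose proof (is_derive_Im _ _ _ Hf).
  pose proof (is_derive_Re _ _ _ Hg). pose proof (is_derive_Im _ _ _ Hg).
  apply is_derive_C; simpl.
  - apply (is_derive_eq _ _ (Re df * Re (g x) + Re (f x) * Re dg
                             - (Im df * Im (g x) + Im (f x) * Im dg))).
    + apply (is_derive_minus (K := R_AbsRing) (V := R_NormedModule));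
        apply (is_derive_mult (K := R_AbsRing)); auto; intros; apply Rmult_comm.
    + unfold Re, Im; simpl; ring.
  - apply (is_derive_eq _ _ (Re df * Im (g x) + Re (f x) * Im dg
                             + (Im df * Re (g x) + Im (f x) * Re dg))).
    + apply (is_derive_plus (K := R_AbsRing) (V := R_NormedModule));
        apply (is_derive_mult (K := R_AbsRing)); auto; intros; apply Rmult_comm.
    + unfold Re, Im; simpl; ring.
Qed.

Lemma is_derive_Cconst (k : C) (x : R) : is_derive (fun _ : R => k) x (RtoC 0).
Proof. apply (is_derive_eq _ _ zero); [apply is_derive_const | reflexivity]. Qed.

Lemma is_derive_Cscal (k : C) (f : R -> C) x df :
  is_derive f x df -> is_derive (fun t => k * f t)%C x (k * df)%C.
Proof.
  intros H. apply (is_derive_Ceq _ _ (0 * f x + k * df)%C); [| ring].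
  apply (is_derive_Cmult (fun _ => k)); [apply is_derive_Cconst | exact H].
Qed.

Lemma cexp_add (a b : C) : cexp (a + b) = (cexp a * cexp b)%C.
Proof.
  unfold cexp, Re, Im; simpl.
  rewrite exp_plus, cos_plus, sin_plus. apply injective_projections; simpl; ring.
Qed.

Lemma cexp_RtoC (a : R) : cexp (RtoC a) = RtoC (exp a).
Proof.
  unfold cexp, Re, Im; simpl. rewrite cos_0, sin_0. apply injective_projections; simpl; ring.
Qed.

Lemma is_derive_cexp (g : R -> C) (x : R) dg :
  is_derive g x dg -> is_derive (fun t => cexp (g t)) x (dg * cexp (g x))%C.
Proof.
  intros H. pose proof (is_derive_Re _ _ _ H) as HRe. pose proof (is_derive_Im _ _ _ H) as HIm.
  apply is_derive_C; unfold cexp; simpl.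
  - apply (is_derive_eq _ _ (Re dg * exp (Re (g x)) * cos (Im (g x))
                             + exp (Re (g x)) * (Im dg * - sin (Im (g x))))).
    + apply (is_derive_mult (fun t => exp (Re (g t))) (fun t => cos (Im (g t)))).
      * apply (is_derive_comp exp), HRe. apply is_derive_exp.
      * apply (is_derive_comp cos), HIm. apply is_derive_cos.
      * intros; apply Rmult_comm.
    + unfold Re, Im; simpl; ring.
  - apply (is_derive_eq _ _ (Re dg * exp (Re (g x)) * sin (Im (g x))
                             + exp (Re (g x)) * (Im dg * cos (Im (g x))))).
    + apply (is_derive_mult (fun t => exp (Re (g t))) (fun t => sin (Im (g t)))).
      * apply (is_derive_comp exp), HRe. apply is_derive_exp.
      * apply (is_derive_comp sin), HIm. apply is_derive_sin.
      * intros; apply Rmult_comm.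
    + unfold Re, Im; simpl; ring.
Qed.

Lemma vscale_cexp_cancel (a : C) (q : R) (z : C * C) :
  vscale (cexp (a - RtoC q)) (vscale (cexp (- a)) (vscale (RtoC (exp q)) z)) = z.
Proof.
  assert (Hone : (cexp (a - RtoC q) * cexp (- a) * RtoC (exp q))%C = 1).
  { rewrite <- cexp_RtoC, <- !cexp_add.
    replace (a - RtoC q + - a + RtoC q)%C with (RtoC 0) by ring.
    rewrite cexp_RtoC, exp_0. reflexivity. }
  destruct z as [z1 z2]. unfold vscale; simpl.
  f_equal; rewrite !Cmult_assoc, Hone; apply Cmult_1_l.
Qed.

Lemma is_derive_cexp_weight (a : C) (s : R) (w F : R -> R) (X dw dF : R) :
  is_derive w (s * X) dw -> is_derive F X dF ->
  is_derive (fun Y => cexp (a * RtoC Y - RtoC (w (s * Y) + F Y)%R)%C) X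
    ((a - RtoC (s * dw + dF)%R) * cexp (a * RtoC X - RtoC (w (s * X) + F X)%R))%C.
Proof.
  intros Hw HF. apply is_derive_cexp, is_derive_Cminus.
  - apply (is_derive_Ceq _ _ (a * RtoC 1)%C); [| apply Cmult_1_r].
    apply is_derive_Cscal, is_derive_RtoC. auto_derive; [exact I | ring].
  - apply is_derive_RtoC, (is_derive_plus (K := R_AbsRing) (V := R_NormedModule)); [| exact HF].
    apply (is_derive_eq _ _ (scal s dw)); [| reflexivity].
    apply (is_derive_comp w (fun Y => s * Y)); [exact Hw |]. auto_derive; [exact I | ring].
Qed.

Lemma is_derive_vscale (k : R -> C) (z : R -> C * C) (x : R) dk dz :
  is_derive k x dk -> is_derive z x dz ->
  is_derive (fun t => vscale (k t) (z t)) x (vadd (vscale dk (z x)) (vscale (k x) dz)).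
Proof.
  intros Hk Hz. apply is_derive_pair; apply is_derive_Cmult; auto.
  - exact (is_derive_fst _ _ _ Hz).
  - exact (is_derive_snd _ _ _ Hz).
Qed.

Lemma is_derive_mv (a b c d : R) (z : R -> C * C) (x : R) dz :
  is_derive z x dz -> is_derive (fun t => mv a b c d (z t)) x (mv a b c d dz).
Proof.
  intros Hz. pose proof (is_derive_fst _ _ _ Hz). pose proof (is_derive_snd _ _ _ Hz).
  apply is_derive_pair; apply is_derive_Cplus; now apply is_derive_Cscal.
Qed.

Lemma is_derive_scale_arg (z : R -> C * C) (a x : R) dz :
  is_derive z (a * x) dz -> is_derive (fun t => z (a * t)) x (vscale (RtoC a) dz).
Proof.
  intros Hz. apply (is_derive_eq _ _ (scal a dz)).
  - apply (is_derive_comp z (fun t => a * t)); [exact Hz |].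
    auto_derive; [exact I | ring].
  - destruct dz as [[d1 d1'] [d2 d2']]. unfold vscale.
    apply injective_projections; apply injective_projections; simpl;
      unfold scal; simpl; unfold mult; simpl; ring.
Qed.

Ltac push_RtoC := repeat rewrite ?RtoC_plus, ?RtoC_minus, ?RtoC_mult, ?RtoC_opp.

Lemma rotmx_opp_rotmx (t : R) (z : C * C) :
  rotmx (- t) (rotmx t z) = vscale (RtoC (cos (2 * t))) z.
Proof.
  unfold rotmx, mv, vscale. rewrite cos_neg, sin_neg, cos_2a.
  apply injective_projections; simpl; push_RtoC; ring.
Qed.

Lemma is_derive_rotmx_rescaled (Bt dBt beta : R -> C * C) (t s : R) :
  s <> 0 -> cos (2 * t) = s -> (forall x, is_derive Bt x (dBt x)) ->
  (forall X, Bt (s * X) = rotmx t (beta X)) ->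
  forall X, is_derive beta X (rotmx (- t) (dBt (s * X))).
Proof.
  intros Hs Hcos HBt Hbeta X.
  assert (Hs' : RtoC s <> 0) by (intros H; injection H; lra).
  apply (is_derive_ext (fun Y => vscale (RtoC (/ s)) (rotmx (- t) (Bt (s * Y))))).
  { intros Y. rewrite Hbeta, rotmx_opp_rotmx, Hcos.
    destruct (beta Y) as [b1 b2]. unfold vscale; simpl.
    f_equal; rewrite Cmult_assoc, <- RtoC_mult, Rinv_l by lra; ring. }
  apply (is_derive_eq _ _ (vadd (vscale (RtoC 0) (rotmx (- t) (Bt (s * X))))
     (vscale (RtoC (/ s)) (rotmx (- t) (vscale (RtoC s) (dBt (s * X))))))).
  - apply (is_derive_vscale (fun _ => RtoC (/ s))); [apply is_derive_Cconst |].
    apply is_derive_mv, is_derive_scale_arg, HBt.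
  - destruct (Bt (s * X)), (dBt (s * X)). unfold rotmx, mv, vadd, vscale; simpl.
    f_equal; rewrite RtoC_inv by lra; field; exact Hs'.
Qed.

(** * Uniqueness for autonomous scalar ODEs *)

Lemma continuous_R_epsilon (g : R -> R) x : continuous g x ->
  forall eps, 0 < eps -> exists d, 0 < d /\ forall y, Rabs (y - x) < d -> Rabs (g y - g x) < eps.
Proof.
  intros Hg eps Heps.
  destruct (Hg (ball (g x) (mkposreal eps Heps)) (locally_ball _ _)) as [d Hd].
  exists d. split; [apply cond_pos | intros y Hy; apply (Hd y Hy)].
Qed.

Lemma continuous_eq_from_left (g h : R -> R) a m : a < m ->
  continuous g m -> continuous h m -> (forall s, a < s < m -> g s = h s) -> g m = h m.
Proof.
  intros Ham Hg Hh Hgh.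
  apply (filterlim_locally_unique (F := at_left m) g).
  - exact (filterlim_filter_le_1 _ (filter_le_within (F := locally m) _) Hg).
  - apply (filterlim_ext_loc h).
    + assert (Hd : 0 < m - a) by lra. exists (mkposreal _ Hd). intros s Hs Hsm.
      assert (Hsm' : Rabs (s - m) < m - a) by exact Hs.
      symmetry. apply Hgh. apply Rabs_def2 in Hsm'. lra.
    + exact (filterlim_filter_le_1 _ (filter_le_within (F := locally m) _) Hh).
Qed.

Definition locally_lipschitz_pos (f : R -> R) : Prop :=
  forall y0, 0 < y0 -> exists d L, 0 < d /\ 0 <= L /\
    forall a b, Rabs (a - y0) < d -> Rabs (b - y0) < d -> Rabs (f a - f b) <= L * Rabs (a - b).

Lemma derivable_locally_lipschitz_pos (f df : R -> R) :
  (forall y, 0 < y -> is_derive f y (df y)) -> (forall y, 0 < y -> continuous df y) ->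
  locally_lipschitz_pos f.
Proof.
  intros Hf Hdf y0 Hy0.
  destruct (continuous_R_epsilon df y0 (Hdf y0 Hy0) 1 Rlt_0_1) as (d1 & Hd1 & Hnear).
  exists (Rmin d1 (y0 / 2)), (Rabs (df y0) + 1).
  pose proof (Rmin_l d1 (y0 / 2)). pose proof (Rmin_r d1 (y0 / 2)).
  split; [apply Rmin_pos; lra |]. split; [pose proof (Rabs_pos (df y0)); lra |].
  intros a b Ha Hb. apply Rabs_def2 in Ha, Hb.
  assert (Hin : forall t, Rmin a b <= t <= Rmax a b -> Rabs (t - y0) < Rmin d1 (y0 / 2)).
  { intros t Ht. apply Rabs_def1; unfold Rmin, Rmax in Ht; destruct (Rle_dec a b); lra. }
  assert (Hpos : forall t, Rmin a b <= t <= Rmax a b -> 0 < t).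
  { intros t Ht. specialize (Hin t Ht). apply Rabs_def2 in Hin. lra. }
  destruct (MVT_gen f a b df) as (t & Ht & E).
  - intros t Ht. apply Hf, Hpos. lra.
  - intros t Ht. apply continuity_pt_filterlim, (ex_derive_continuous (V := R_NormedModule)).
    eexists. apply Hf, Hpos, Ht.
  - assert (Hdft : Rabs (df t) <= Rabs (df y0) + 1).
    { assert (Rabs (df t - df y0) < 1) by (apply Hnear; specialize (Hin t Ht); lra).
      pose proof (Rabs_triang_inv (df t) (df y0)). lra. }
    rewrite Rabs_minus_sym, E, Rabs_mult, (Rabs_minus_sym b a).
    apply Rmult_le_compat_r; [apply Rabs_pos | exact Hdft].
Qed.

Section AutonomousODE.
Variable f : R -> R.
Hypothesis Hf : locally_lipschitz_pos f.
Variables y1 y2 : R -> R.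
Hypothesis Hy1 : forall t, is_derive y1 t (f (y1 t)).
Hypothesis Hy2 : forall t, is_derive y2 t (f (y2 t)).
Hypothesis Hy2_pos : forall t, 0 < y2 t.

Lemma ode_solution_continuous (y : R -> R) t :
  (forall t, is_derive y t (f (y t))) -> continuous y t.
Proof. intros Hy. apply (ex_derive_continuous (V := R_NormedModule)). eexists. apply Hy. Qed.

Lemma one_sided_lipschitz (L a b fa fb : R) :
  Rabs (fa - fb) <= L * Rabs (a - b) -> (a - b) * (fa - fb) <= L * (a - b) ^ 2.
Proof.
  intros H. apply (Rle_trans _ (Rabs (a - b) * Rabs (fa - fb))).
  - rewrite <- Rabs_mult. apply Rle_abs.
  - apply (Rle_trans _ (Rabs (a - b) * (L * Rabs (a - b)))).
    + apply Rmult_le_compat_l; [apply Rabs_pos | exact H].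
    + replace ((a - b) ^ 2) with (Rabs (a - b) * Rabs (a - b)); [right; ring |].
      rewrite <- Rabs_mult, Rabs_right; [ring | apply Rle_ge, Rle_0_sqr].
Qed.

(* Gronwall: [(y1 - y2)^2 e^(-2 L s)] is nonincreasing while both solutions stay in a
   ball where [f] is [L]-Lipschitz. *)
Lemma ode_unique_local_forward t1 : y1 t1 = y2 t1 ->
  exists e, 0 < e /\ forall t, t1 <= t < t1 + e -> y1 t = y2 t.
Proof.
  intros Heq.
  destruct (Hf _ (Hy2_pos t1)) as (d & L & Hd & HL & Hlip).
  destruct (continuous_R_epsilon y1 t1 (ode_solution_continuous y1 t1 Hy1) d Hd)
    as (e1 & He1 & C1).
  destruct (continuous_R_epsilon y2 t1 (ode_solution_continuous y2 t1 Hy2) d Hd)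
    as (e2 & He2 & C2).
  pose proof (Rmin_l e1 e2). pose proof (Rmin_r e1 e2).
  exists (Rmin e1 e2). split; [apply Rmin_pos; lra |]. intros t Ht.
  set (D := fun s => y1 s - y2 s).
  set (E := fun s => D s ^ 2 * exp (- 2 * L * s)).
  set (dE := fun s => exp (- 2 * L * s) * (2 * D s * (f (y1 s) - f (y2 s)) - 2 * L * D s ^ 2)).
  assert (HdE : forall s, is_derive E s (dE s)).
  { intros s. unfold E, dE, D.
    assert (ex_derive y1 s) by (eexists; apply Hy1).
    assert (ex_derive y2 s) by (eexists; apply Hy2).
    auto_derive; [tauto |].
    rewrite (is_derive_unique (fun x : R => y1 x) s _ (Hy1 s)),
      (is_derive_unique (fun x : R => y2 x) s _ (Hy2 s)).
    ring. }
  destruct (MVT_gen E t1 t dE) as (c & Hc & HE).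
  - intros s _. apply HdE.
  - intros s _. apply continuity_pt_filterlim, (ex_derive_continuous (V := R_NormedModule)).
    eexists. apply HdE.
  - assert (Hc' : t1 <= c <= t).
    { unfold Rmin, Rmax in Hc. destruct (Rle_dec t1 t); lra. }
    assert (Hc1 : Rabs (y1 c - y2 t1) < d).
    { rewrite <- Heq. apply C1. rewrite Rabs_right; lra. }
    assert (Hc2 : Rabs (y2 c - y2 t1) < d) by (apply C2; rewrite Rabs_right; lra).
    assert (Hslope : D c * (f (y1 c) - f (y2 c)) <= L * D c ^ 2)
      by (apply one_sided_lipschitz, Hlip; assumption).
    assert (HdEc : dE c <= 0).
    { unfold dE. pose proof (exp_pos (- 2 * L * c)). nra. }
    assert (HEt : E t <= 0).
    { assert (E t1 = 0) by (unfold E, D; rewrite Heq; ring). nra. }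
    unfold E in HEt. pose proof (exp_pos (- 2 * L * t)).
    assert (D t ^ 2 = 0) by nra. unfold D in *. nra.
Qed.

Lemma ode_unique_forward t0 : y1 t0 = y2 t0 -> forall t, t0 <= t -> y1 t = y2 t.
Proof.
  intros H0 T HT. destruct (Req_dec (y1 T) (y2 T)) as [| HneT]; [assumption | exfalso].
  set (S := fun x => t0 <= x /\ forall s, t0 <= s <= x -> y1 s = y2 s).
  assert (Ht0 : S t0).
  { split; [lra |]. intros s Hs. replace s with t0 by lra. exact H0. }
  destruct (completeness S) as [m [Hub Hleast]].
  - exists T. intros x [_ Hx]. destruct (Rle_dec x T); [assumption |].
    exfalso. apply HneT, Hx. lra.
  - exists t0. exact Ht0.
  - assert (Hm0 : t0 <= m) by (apply Hub, Ht0).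
    assert (Hbelow : forall s, t0 <= s < m -> y1 s = y2 s).
    { intros s Hs. destruct (Req_dec (y1 s) (y2 s)) as [| Hne]; [assumption | exfalso].
      assert (m <= s); [| lra].
      apply Hleast. intros x [_ Hx]. destruct (Rle_dec x s); [assumption |].
      exfalso. apply Hne, Hx. lra. }
    assert (Hm : y1 m = y2 m).
    { destruct (Rle_lt_or_eq_dec t0 m Hm0) as [Hlt | <-]; [| exact H0].
      apply (continuous_eq_from_left y1 y2 t0 m Hlt);
        [apply ode_solution_continuous, Hy1 | apply ode_solution_continuous, Hy2 |].
      intros s Hs. apply Hbelow. lra. }
    destruct (ode_unique_local_forward m Hm) as (e & He & Hloc).
    assert (m + e / 2 <= m); [| lra].
    apply Hub. split; [lra |]. intros s Hs.
    destruct (Rlt_le_dec s m); [apply Hbelow | apply Hloc]; lra.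
Qed.

End AutonomousODE.

Lemma locally_lipschitz_pos_opp (f : R -> R) :
  locally_lipschitz_pos f -> locally_lipschitz_pos (fun y => - f y).
Proof.
  intros Hf y0 Hy0. destruct (Hf y0 Hy0) as (d & L & Hd & HL & Hlip).
  exists d, L. repeat split; try assumption. intros a b Ha Hb.
  replace (- f a - - f b) with (- (f a - f b)) by ring. rewrite Rabs_Ropp. auto.
Qed.

Lemma ode_solution_reflect (f y : R -> R) : (forall t, is_derive y t (f (y t))) ->
  forall s, is_derive (fun s => y (- s)) s (- f (y (- s))).
Proof.
  intros Hy s. apply (is_derive_eq _ _ (scal (-1) (f (y (- s))))).
  - apply (is_derive_comp y Ropp); [apply Hy |]. auto_derive; [exact I | ring].
  - unfold scal; simpl; unfold mult; simpl; ring.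
Qed.

Lemma ode_unique (f : R -> R) (y1 y2 : R -> R) : locally_lipschitz_pos f ->
  (forall t, is_derive y1 t (f (y1 t))) -> (forall t, is_derive y2 t (f (y2 t))) ->
  (forall t, 0 < y2 t) -> forall t0, y1 t0 = y2 t0 -> forall t, y1 t = y2 t.
Proof.
  intros Hf Hy1 Hy2 Hpos t0 H0 t.
  destruct (Rle_dec t0 t) as [Hle | Hgt].
  { exact (ode_unique_forward f Hf y1 y2 Hy1 Hy2 Hpos t0 H0 t Hle). }
  pose proof (ode_unique_forward (fun y => - f y) (locally_lipschitz_pos_opp f Hf)
    (fun s => y1 (- s)) (fun s => y2 (- s)) (ode_solution_reflect f y1 Hy1)
    (ode_solution_reflect f y2 Hy2) (fun s => Hpos (- s)) (- t0)) as Hback.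
  simpl in Hback. rewrite <- (Ropp_involutive t).
  apply Hback; [rewrite Ropp_involutive; exact H0 | lra].
Qed.

(** * The kink profile *)

Section Nonlinearity.
Variable N : R -> R.
Hypothesis HN : admissible_nonlinearity N.

Lemma N_ex_derive x : 0 < x -> ex_derive N x.
Proof. destruct HN as [[Hsmooth _] _]. exact (Hsmooth 1%nat x). Qed.

Lemma N'_ex_derive x : 0 < x -> ex_derive (Derive N) x.
Proof. destruct HN as [[Hsmooth _] _]. exact (Hsmooth 2%nat x). Qed.

Lemma N_decreasing a b : 0 < a -> a < b -> N b < N a.
Proof.
  intros Ha Hab. destruct HN as (_ & HN' & _).
  apply Ropp_lt_cancel, (incr_function (fun x => - N x) 0 p_infty (fun x => - Derive N x));
    simpl; try lra; intros x Hx _.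
  - apply (is_derive_opp (K := R_AbsRing) (V := R_NormedModule)).
    apply Derive_correct, N_ex_derive, Hx.
  - specialize (HN' x Hx). lra.
Qed.

Lemma N_nonincreasing a b : 0 < a -> a <= b -> N b <= N a.
Proof. intros Ha [Hab | <-]; [left; apply N_decreasing |]; lra. Qed.

Lemma N_pos y : 0 <= y < 1 -> 0 < N y.
Proof.
  intros [[Hy | <-] Hy1]; destruct HN as (_ & _ & HN0 & HN1 & _); [| lra].
  rewrite <- HN1. apply N_decreasing; lra.
Qed.

Definition kink_field (y : R) : R := y * N (y ^ 2).

Lemma kink_field_lipschitz : locally_lipschitz_pos kink_field.
Proof.
  apply (derivable_locally_lipschitz_pos _ (fun y => N (y ^ 2) + 2 * y ^ 2 * Derive N (y ^ 2)));
    intros y Hy; assert (Hy2 : 0 < y * (y * 1)) by nra.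
  - unfold kink_field. auto_derive; [now apply N_ex_derive | simpl; ring_simplify; reflexivity].
  - apply (ex_derive_continuous (V := R_NormedModule)).
    auto_derive. repeat split; [apply N_ex_derive | apply N'_ex_derive]; assumption.
Qed.

End Nonlinearity.

Lemma cos_theta_pos c : -1 <= c <= 1 -> 0 < cos (theta c).
Proof.
  intros Hc. pose proof (asin_bound c). pose proof PI_RGT_0.
  unfold theta. apply cos_gt_0; lra.
Qed.

Lemma cos_2theta c : -1 <= c <= 1 -> cos (2 * theta c) = sqrt (1 - c ^ 2).
Proof.
  intros Hc. unfold theta. replace (2 * (- (1 / 2) * asin c)) with (- asin c) by field.
  rewrite cos_neg, cos_asin by assumption. unfold Rsqr. f_equal. ring.
Qed.

Lemma sin_2theta c : -1 <= c <= 1 -> sin (2 * theta c) = - c.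
Proof.
  intros Hc. unfold theta. replace (2 * (- (1 / 2) * asin c)) with (- asin c) by field.
  rewrite sin_neg, sin_asin by assumption. reflexivity.
Qed.

Section KinkProfile.
Variable N : R -> R.
Hypothesis HN : admissible_nonlinearity N.
Variable c : R.
Hypothesis Hc : -1 < c < 1.
Variables u v r0 : R -> R.
Hypothesis Hkink : is_kink N c u v.
Hypothesis Hr0 : is_r0 N r0.

Let s := sqrt (1 - c ^ 2).

Lemma sqrt_1_c2_pos : 0 < s.
Proof. apply sqrt_lt_R0. nra. Qed.

Definition kink_amplitude (X : R) : R := u (s * X) / cos (theta c).

Lemma kink_u_amplitude X : u (s * X) = kink_amplitude X * cos (theta c).
Proof.
  unfold kink_amplitude. pose proof (cos_theta_pos c ltac:(lra)). field. lra.
Qed.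

Lemma kink_v_amplitude X : v (s * X) = kink_amplitude X * sin (theta c).
Proof.
  destruct Hkink as (_ & Hv & _). rewrite Hv, kink_u_amplitude. unfold tan.
  pose proof (cos_theta_pos c ltac:(lra)). field. lra.
Qed.

Lemma kink_modulus_sq X : u (s * X) ^ 2 + v (s * X) ^ 2 = kink_amplitude X ^ 2.
Proof.
  rewrite kink_u_amplitude, kink_v_amplitude.
  pose proof (sin2_cos2 (theta c)). unfold Rsqr in *. nra.
Qed.

Lemma kink_amplitude_pos X : 0 < kink_amplitude X.
Proof.
  destruct Hkink as (_ & _ & Hu & _). unfold kink_amplitude.
  apply Rdiv_lt_0_compat; [apply Hu | apply cos_theta_pos; lra].
Qed.

Lemma kink_amplitude_ode X : is_derive kink_amplitude X (kink_field N (kink_amplitude X)).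
Proof.
  destruct Hkink as (Hu' & _).
  pose proof sqrt_1_c2_pos. pose proof (cos_theta_pos c ltac:(lra)).
  unfold kink_amplitude at 1. auto_derive; [eexists; apply Hu' |].
  rewrite (is_derive_unique (fun x : R => u x) _ _ (Hu' (s * X))), kink_modulus_sq.
  unfold kink_field, kink_amplitude. fold s. field. lra.
Qed.

Lemma kink_amplitude_0 : kink_amplitude 0 = 1 / 2.
Proof.
  destruct Hkink as (_ & _ & _ & H0).
  pose proof (kink_modulus_sq 0) as E. rewrite Rmult_0_r, H0 in E.
  pose proof (kink_amplitude_pos 0). nra.
Qed.

Lemma r0_kink_amplitude X : r0 X = kink_amplitude X.
Proof.
  destruct Hr0 as [Hr0' Hr00].
  apply (ode_unique (kink_field N) r0 kink_amplitude (kink_field_lipschitz N HN) Hr0'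
           kink_amplitude_ode kink_amplitude_pos 0).
  rewrite Hr00, kink_amplitude_0. reflexivity.
Qed.

(* [1] is an equilibrium of the profile equation, so the amplitude cannot reach it. *)
Lemma kink_amplitude_ne_1 X : kink_amplitude X <> 1.
Proof.
  intros E.
  assert (Hone : forall t, is_derive (fun _ => 1) t (kink_field N 1)).
  { intros t. unfold kink_field. destruct HN as (_ & _ & _ & HN1 & _).
    rewrite pow1, HN1, Rmult_0_r.
    apply (is_derive_const (K := R_AbsRing) (V := R_NormedModule)). }
  pose proof (ode_unique (kink_field N) kink_amplitude (fun _ => 1) (kink_field_lipschitz N HN)
    kink_amplitude_ode Hone (fun _ => Rlt_0_1) X E 0) as E0.
  rewrite kink_amplitude_0 in E0. lra.
Qed.

Lemma r0_bounds X : 0 < r0 X < 1.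
Proof.
  rewrite r0_kink_amplitude. split; [apply kink_amplitude_pos |].
  destruct (Rlt_le_dec (kink_amplitude X) 1) as [| Hge]; [assumption | exfalso].
  destruct (IVT_gen_consistent kink_amplitude 0 X 1) as (y & _ & Hy).
  - intros t. apply (ex_derive_continuous (V := R_NormedModule)).
    eexists. apply kink_amplitude_ode.
  - rewrite kink_amplitude_0. unfold Rmin, Rmax.
    destruct (Rle_dec (1 / 2) (kink_amplitude X)); lra.
  - exact (kink_amplitude_ne_1 y Hy).
Qed.

Lemma kink_u_r0 X : u (s * X) = r0 X * cos (theta c).
Proof. rewrite r0_kink_amplitude. apply kink_u_amplitude. Qed.

Lemma kink_v_r0 X : v (s * X) = r0 X * sin (theta c).
Proof. rewrite r0_kink_amplitude. apply kink_v_amplitude. Qed.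

End KinkProfile.

(** * The integral of [Np] *)

Lemma exp_m_infty_at_right : filterlim exp (Rbar_locally m_infty) (at_right 0).
Proof.
  intros P [d HP].
  destruct (is_lim_exp_m (ball 0 d) (locally_ball _ _)) as [M HM].
  exists M. intros y Hy. apply HP; [apply HM, Hy | apply exp_pos].
Qed.

Section ImproperIntegral.
Variable N : R -> R.
Hypothesis HN : admissible_nonlinearity N.
Variable r0 : R -> R.
Hypothesis Hr0 : is_r0 N r0.
Hypothesis Hr0_bounds : forall X, 0 < r0 X < 1.

Lemma N_r0_pos X : 0 < N (r0 X ^ 2).
Proof. apply (N_pos N HN). pose proof (Hr0_bounds X). split; nra. Qed.

Lemma r0_derive X : is_derive r0 X (r0 X * N (r0 X ^ 2)).
Proof. apply Hr0. Qed.

Lemma r0_lt_half X : X < 0 -> r0 X < 1 / 2.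
Proof.
  intros HX. destruct Hr0 as [_ Hr00]. rewrite <- Hr00.
  apply (incr_function r0 m_infty p_infty (fun t => r0 t * N (r0 t ^ 2))); simpl; auto.
  - intros t _ _. apply r0_derive.
  - intros t _ _. apply Rmult_lt_0_compat; [apply Hr0_bounds | apply N_r0_pos].
Qed.

(* For [X <= 0] the profile equation gives [(ln (r0^2))' = 2 N (r0^2) >= 2 N (1/4)]. *)
Lemma ln_r0_sq_bound X : X <= 0 -> ln (r0 X ^ 2) <= ln (1 / 4) + N (1 / 4) * X.
Proof.
  intros HX. destruct Hr0 as [_ Hr00].
  assert (Ha : 0 < N (1 / 4)) by (apply (N_pos N HN); lra).
  assert (H0 : ln (r0 0 ^ 2) = ln (1 / 4)) by (rewrite Hr00; f_equal; field).
  destruct HX as [HX | ->]; [| rewrite H0; lra].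
  cut (ln (r0 X ^ 2) - N (1 / 4) * X < ln (r0 0 ^ 2) - N (1 / 4) * 0); [rewrite H0; lra |].
  apply (incr_function_le (fun t => ln (r0 t ^ 2) - N (1 / 4) * t) m_infty 0
           (fun t => 2 * N (r0 t ^ 2) - N (1 / 4))); try easy; [| | apply Rle_refl];
    intros t _ Ht; simpl in Ht; pose proof (Hr0_bounds t).
  - auto_derive.
    + repeat split; [eexists; apply r0_derive | nra].
    + rewrite (is_derive_unique (fun x : R => r0 x) _ _ (r0_derive t)). simpl. field. lra.
  - assert (r0 t <= 1 / 2) by (destruct Ht as [Ht | ->]; [left; apply r0_lt_half | lra]; lra).
    assert (N (1 / 4) <= N (r0 t ^ 2)) by (apply (N_nonincreasing N HN); nra).
    lra.
Qed.

Lemma r0_sq_m_infty : filterlim (fun X => r0 X ^ 2) (Rbar_locally m_infty) (at_right 0).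
Proof.
  assert (Ha : 0 < N (1 / 4)) by (apply (N_pos N HN); lra).
  apply (filterlim_ext (fun X => exp (ln (r0 X ^ 2)))).
  { intros X. apply exp_ln. pose proof (Hr0_bounds X). nra. }
  apply (filterlim_comp _ _ _ _ exp _ (Rbar_locally m_infty)); [| exact exp_m_infty_at_right].
  apply (filterlim_le_m_infty (fun X => ln (1 / 4) + N (1 / 4) * X)).
  - exists 0. intros X HX. apply ln_r0_sq_bound. lra.
  - intros P [M HP]. exists ((M - ln (1 / 4)) / N (1 / 4)). intros X HX. apply HP.
    apply (Rmult_lt_compat_l (N (1 / 4))) in HX; [| exact Ha].
    replace (N (1 / 4) * ((M - ln (1 / 4)) / N (1 / 4))) with (M - ln (1 / 4)) in HX
      by (field; lra).
    lra.
Qed.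

Definition calNp_primitive (X : R) : R := / 2 * ln (N (r0 X ^ 2)).

Lemma calNp_primitive_derive X : is_derive calNp_primitive X (calNp N r0 X).
Proof.
  pose proof (Hr0_bounds X). pose proof (N_r0_pos X).
  assert (Hr2 : 0 < r0 X * (r0 X * 1)) by nra.
  unfold calNp_primitive, calNp. auto_derive.
  - repeat split; [now apply (N_ex_derive N HN) | eexists; apply r0_derive | exact (N_r0_pos X)].
  - rewrite (is_derive_unique (fun x : R => r0 x) _ _ (r0_derive X)).
    change (Derive (fun x : R => N x)) with (Derive N). simpl. field. simpl in *. lra.
Qed.

Lemma calNp_continuous X : continuous (calNp N r0) X.
Proof.
  pose proof (Hr0_bounds X). assert (Hr2 : 0 < r0 X * (r0 X * 1)) by nra.
  apply (ex_derive_continuous (V := R_NormedModule)). unfold calNp. auto_derive.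
  repeat split; [now apply (N'_ex_derive N HN) | eexists; apply r0_derive ..].
Qed.

Lemma calNp_primitive_m_infty :
  filterlim calNp_primitive (Rbar_locally m_infty) (locally 0).
Proof.
  destruct HN as ((_ & _ & HN0) & _ & HN0' & _).
  apply (filterlim_comp _ _ _ (fun X => r0 X ^ 2) (fun z => / 2 * ln (N z)) _ (at_right 0));
    [exact r0_sq_m_infty |].
  apply (filterlim_comp _ _ _ N (fun z => / 2 * ln z) _ (locally (N 0))); [exact HN0 |].
  rewrite HN0'. replace 0 with (/ 2 * ln 1) by (rewrite ln_1; ring).
  apply (ex_derive_continuous (V := R_NormedModule) (fun z => / 2 * ln z)).
  auto_derive. lra.
Qed.

Lemma RInt_gen_calNp X :
  RInt_gen (calNp N r0) (Rbar_locally m_infty) (at_point X) = calNp_primitive X.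
Proof.
  assert (Hall : forall G : R * R -> Prop, (forall ab, G ab) ->
            filter_prod (Rbar_locally m_infty) (at_point X) G).
  { intros G HG. apply (Filter_prod _ _ _ (fun _ => True) (fun _ => True));
      [exists 0; auto | reflexivity | intros; apply HG]. }
  apply (is_RInt_gen_unique (V := R_CompleteNormedModule)).
  replace (calNp_primitive X) with (calNp_primitive X - 0) by ring.
  apply (is_RInt_gen_ext (Derive calNp_primitive)).
  { apply Hall. intros ab x _. apply is_derive_unique, calNp_primitive_derive. }
  apply is_RInt_gen_Derive.
  - apply Hall. intros ab x _. eexists. apply calNp_primitive_derive.
  - apply Hall. intros ab x _. apply (continuous_ext (calNp N r0)); [| apply calNp_continuous].
    intros t. symmetry. apply is_derive_unique, calNp_primitive_derive.
  - exact calNp_primitive_m_infty.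
  - intros P HP. exact (locally_singleton _ _ HP).
Qed.
End ImproperIntegral.

(** * The eigenvalue equation in rotated coordinates *)

Lemma Lstar_w_eigen_rotated (N : R -> R) (c : R) (u v w : R -> R) (Bt dBt : R -> C * C)
    (x t s r : R) (L : C) (b : C * C) :
  s <> 0 -> cos (2 * t) = s -> sin (2 * t) = - c ->
  u x = r * cos t -> v x = r * sin t -> Bt x = rotmx t b ->
  Lstar_w N c u v w Bt dBt x = vscale (RtoC s * L) (Bt x) ->
  rotmx (- t) (dBt x) =
  vadd (mv (s * Derive w x + N (r ^ 2) + 2 * (Derive N (r ^ 2) * r ^ 2))
           (- (2 * c * (Derive N (r ^ 2) * r ^ 2))) 0 (s * Derive w x - N (r ^ 2)) b)
       (vscale L (mv (- c) 1 1 (- c) b)).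
Proof.
  intros Hs Hcos Hsin Hu Hv Hb Heig.
  rewrite cos_2a in Hcos. rewrite sin_2a in Hsin.
  pose proof (sin2_cos2 t) as Hpyth. unfold Rsqr in Hpyth.
  assert (Hr : u x ^ 2 + v x ^ 2 = r ^ 2) by (rewrite Hu, Hv; nra).
  (* [Σ] has determinant [- s^2]; its invertibility reaches [nsatz] as [s * / s = 1]. *)
  assert (Hsi : s * / s = 1) by (field; exact Hs).
  unfold Lstar_w, Astar, rotmx in *. cbv zeta in Heig.
  rewrite Hr, Hu, Hv, Hb in Heig. rewrite cos_neg, sin_neg.
  set (cs := cos t) in *. set (sn := sin t) in *. set (si := / s) in *.
  set (n := N (r ^ 2)) in *. set (p := Derive N (r ^ 2)) in *. set (W := Derive w x) in *.
  clearbody cs sn si n p W. clear Hr Hu Hv Hb Hs.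
  assert (Hc : c = - (2 * sn * cs)) by lra. subst c s.
  destruct (dBt x) as [[d1 d1'] [d2 d2']], b as [[b1 b1'] [b2 b2']], L as [l l'].
  unfold vadd, mv, vsub, vscale in *; simpl in *.
  injection Heig as E1 E1' E2 E2'.
  apply injective_projections; apply injective_projections; simpl; nsatz.
Qed.

Theorem proposition8p7
  (N : R -> R) (HN : admissible_nonlinearity N)
  (c : R) (Hc0 : 0 <= c) (Hc1 : c < 1)
  (u v : R -> R) (Hkink : is_kink N c u v)
  (r0 : R -> R) (Hr0 : is_r0 N r0)
  (w : R -> R) (Hw : is_weight N c w)
  (lam : C) (Bt dBt : R -> C * C)
  (HBt_der : forall x, is_derive Bt x (dBt x))
  (HBt_L2 : L2_C2 Bt)
  (Heig : forall x, Lstar_w N c u v w Bt dBt x = vscale lam (Bt x))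
  (beta B : R -> C * C)
  (Hbeta : forall X, Bt (sqrt (1 - c ^ 2) * X) = rotmx (theta c) (beta X))
  (HB : forall X,
     beta X =
     vscale (cexp (- (RtoC c * (lam / RtoC (sqrt (1 - c ^ 2))) * RtoC X))%C)
       (vscale (RtoC (exp (w (sqrt (1 - c ^ 2) * X)
                           + RInt_gen (calNp N r0) (Rbar_locally m_infty) (at_point X))))
          (B X))) :
  let Lam := (lam / RtoC (sqrt (1 - c ^ 2)))%C in
  forall X : R,
    is_derive (fun Y => fst (B Y)) X
      (RtoC (calN0 N r0 X + calNp N r0 X) * fst (B X)
       + (Lam - RtoC (2 * c * calNp N r0 X)) * snd (B X))%C /\
    is_derive (fun Y => snd (B Y)) X
      (Lam * fst (B X) - RtoC (calN0 N r0 X + calNp N r0 X) * snd (B X))%C.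
Proof.
  intros Lam X.
  assert (Hc : -1 < c < 1) by lra.
  pose proof (r0_bounds N HN c Hc u v r0 Hkink Hr0) as Hr0_bounds.
  set (s := sqrt (1 - c ^ 2)) in *. fold Lam in HB.
  assert (Hs : 0 < s) by exact (sqrt_1_c2_pos c Hc).
  set (E := fun Y => cexp (RtoC c * Lam * RtoC Y - RtoC (w (s * Y) + calNp_primitive N r0 Y)%R)%C).
  assert (HBE : forall Y, B Y = vscale (E Y) (beta Y)).
  { intros Y. rewrite HB, (RInt_gen_calNp N HN r0 Hr0 Hr0_bounds).
    symmetry. apply vscale_cexp_cancel. }
  assert (HE := is_derive_cexp_weight (RtoC c * Lam) s w (calNp_primitive N r0) X _ _
    (Derive_correct w _ (proj1 Hw 1%nat (s * X)))
    (calNp_primitive_derive N HN r0 Hr0 Hr0_bounds X)).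
  assert (Hbeta' := is_derive_rotmx_rescaled Bt dBt beta (theta c) s ltac:(lra)
    (cos_2theta c ltac:(lra)) HBt_der Hbeta X).
  assert (Hlam : lam = (RtoC s * Lam)%C).
  { unfold Lam. field. intros H. injection H. lra. }
  rewrite Hlam in Heig.
  assert (Hrot := Lstar_w_eigen_rotated N c u v w Bt dBt (s * X) (theta c) s (r0 X) Lam (beta X)
    ltac:(lra) (cos_2theta c ltac:(lra)) (sin_2theta c ltac:(lra))
    (kink_u_r0 N HN c Hc u v r0 Hkink Hr0 X) (kink_v_r0 N HN c Hc u v r0 Hkink Hr0 X)
    (Hbeta X) (Heig (s * X))).
  pose proof (is_derive_ext _ B X _ (fun Y => eq_sym (HBE Y))
    (is_derive_vscale E beta X _ _ HE Hbeta')) as HB'.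
  rewrite Hrot in HB'. rewrite (HBE X). destruct (beta X) as [b1 b2].
  split; [apply (is_derive_Ceq _ _ _ _ (is_derive_fst _ _ _ HB')) |
          apply (is_derive_Ceq _ _ _ _ (is_derive_snd _ _ _ HB'))];
    unfold vadd, vscale, mv, calN0, calNp, E; simpl; push_RtoC; ring.
Qed.
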